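(* Let $f\in L^2(\rho_X)$ satisfy $\|f-\eta\|_{L^2(\rho_X)}\le\varepsilon$ for some $\varepsilon>0$. Then: (i) If $\eta$ satisfies the low-noise condition, i.e. there are $q>0$, $C>0$ with $\mathbb P(|\eta(X)|\le\delta)\le C\delta^q$ for all $\delta>0$, then for all $\delta>\varepsilon$ and $0<\nu<\delta$, \[\mathbb P(|f(X)|\le\nu)\le\frac{\varepsilon^2}{(\delta-\nu)^2}+C\delta^q.\] (ii) If $\eta$ satisfies the hard-margin condition $\mathbb P(|\eta(X)|>\delta)=1$ for some $\delta>0$, and $\varepsilon<\delta$, then for all $\nu<\delta$, \[\mathbb P(|f(X)|\le\nu)\le\frac{\varepsilon^2}{(\delta-\nu)^2}.\]
   Context: $\mathcal X=[0,1]^d$, $\rho$ is a probability distribution on $\mathcal X\times\{-1,1\}$ with $X$-marginal $\rho_X$, $(X,Y)\sim\rho$, and $\eta(x)=\mathbb E[Y\mid X=x]$. *)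

From HB Require Import structures.
From mathcomp Require Import all_boot all_order all_algebra.
From mathcomp Require Import all_classical all_reals all_analysis.
Set Implicit Arguments. Unset Strict Implicit. Unset Printing Implicit Defensive.
Import Order.TTheory GRing.Theory Num.Theory.
Local Open Scope classical_set_scope.
Local Open Scope ring_scope.

Definition cube (R : realType) (d : nat) : set (d.-tuple R) :=
  [set x | forall i : 'I_d, 0 <= tnth x i <= 1].

Definition labels (R : realType) : set R := [set y | y = -1 \/ y = 1].

Definition projX (R : realType) (d : nat) : d.-tuple R * R -> d.-tuple R := fst.

HB.instance Definition _ (R : realType) (d : nat) :=
  isMeasurableFun.Build _ _ _ _ (@projX R d) measurable_fst.

Definition marginalX (R : realType) (d : nat)
  (rho : probability (d.-tuple R * R)%type R) :=
  distribution rho (@projX R d).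

Definition supported_on_cube_labels (R : realType) (d : nat)
  (rho : probability (d.-tuple R * R)%type R) : Prop :=
  rho (@cube R d `*` @labels R) = 1%:E.

(* eta is (a version of) the regression function E[Y | X = x]:
   measurable, rho_X-integrable, and for every measurable A,
   E[Y 1_{X in A}] = \int_A eta d rho_X. *)
Definition is_regression_function (R : realType) (d : nat)
  (rho : probability (d.-tuple R * R)%type R) (eta : d.-tuple R -> R) : Prop :=
  measurable_fun setT eta /\
  (marginalX rho).-integrable setT (fun x => (eta x)%:E) /\
  forall A : set (d.-tuple R), measurable A ->
    (\int[rho]_(z in A `*` setT) (z.2)%:E
     = \int[marginalX rho]_(x in A) (eta x)%:E)%E.

Definition in_L2 (R : realType) (d : nat)
  (rho : probability (d.-tuple R * R)%type R) (f : d.-tuple R -> R) : Prop :=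
  measurable_fun setT f /\
  (\int[marginalX rho]_x ((f x) ^+ 2)%:E < +oo)%E.

From HB Require Import structures.
From mathcomp Require Import all_boot all_order all_algebra.
From mathcomp Require Import all_classical all_reals all_analysis.
From mathcomp Require Import measurable_realfun lra.
Import Order.TTheory GRing.Theory Num.Theory.
Local Open Scope classical_set_scope.
Local Open Scope ring_scope.

(* If |f x| <= nu, then either |eta x| <= delta, or, by the triangle
   inequality, |f x - eta x| >= delta - nu.  Chebyshev's inequality in L^2
   bounds the measure of the second event by eps^2 / (delta - nu)^2; the first
   event has measure at most C delta^q under the low-noise condition and is
   null under the hard-margin condition. *)

Lemma norm_le_subsetU {T : Type} {R : realFieldType} (f eta : T -> R)
    (delta nu : R) :
  [set x | `|f x| <= nu] `<=`
  [set x | delta - nu <= `|f x - eta x|] `|` [set x | `|eta x| <= delta].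
Proof.
move=> x /= fx_le; have [|eta_gt] := leP `|eta x| delta; [by right | left].
have := ler_normB (f x) (f x - eta x); rewrite opprB addrC subrK; lra.
Qed.

Section measure_deviation.
Context {d : measure_display} {T : measurableType d} {R : realType}.
Variable mu : {measure set T -> \bar R}.

Lemma measurable_normr_itv (h : T -> R) (i : interval R) :
  measurable_fun setT h -> measurable ((fun x => `|h x|) @^-1` [set` i]).
Proof.
move=> mh; rewrite -[_ @^-1` _]setTI.
by apply: measurableT_comp => //; exact: measurable_itv.
Qed.

Lemma Lnorm2_chebyshev (g : T -> R) (eps t : R) :
  measurable_fun setT g -> 0 < t ->
  ('N[mu]_2%:E[EFin \o g] <= eps%:E)%E ->
  (mu [set x | (t <= `|g x|)%R] <= (eps ^+ 2 / t ^+ 2)%:E)%E.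
Proof.
move=> mg t_gt0 g_le.
pose sq (r : R) := r ^+ 2.
have markov_sq : ((t ^+ 2)%:E * mu [set x | (t <= `|g x|)%R]
    <= \int[mu]_x er_map sq `|(g x)%:E|)%E.
  have -> : [set x | t <= `|g x|] = setT `&` [set x | (t%:E <= `|(g x)%:E|)%E].
    by rewrite setTI; apply/seteqP; split => x /=; rewrite lee_fin.
  apply: le_integral_comp_abse => //; last exact/measurable_EFinP.
  - exact: (measurable_er_map T (@exprn_measurable R setT 2)).
  - by case => //= r _; rewrite lee_fin sqr_ge0.
  - move=> [x| |] [y| |]; rewrite !inE/= !in_itv/= ?andbT ?lee_fin ?leey//.
    by move=> ? ? ?; rewrite /sq ler_sqr.
have int_sq : (\int[mu]_x er_map sq `|(g x)%:E| <= (eps ^+ 2)%:E)%E.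
  have eps_ge0 : 0 <= eps by rewrite -lee_fin (le_trans _ g_le)// Lnorm_ge0.
  have -> : (\int[mu]_x er_map sq `|(g x)%:E|)%E
      = ('N[mu]_2%:E[EFin \o g] `^ 2)%E.
    rewrite poweR_Lnorm ?pnatr_eq0//; apply: eq_integral => x _.
    by rewrite /= powR_mulrn.
  rewrite -(powR_mulrn 2 eps_ge0) -poweR_EFin.
  by apply: gt0_ler_poweR; rewrite ?in_itv /= ?leey ?andbT ?lee_fin ?Lnorm_ge0.
rewrite mulrC EFinM lee_pdivlMl ?exprn_gt0//.
exact: le_trans markov_sq int_sq.
Qed.

Lemma measure_norm_le_deviation {f eta : T -> R} {eps delta nu : R} :
  measurable_fun setT f -> measurable_fun setT eta -> nu < delta ->
  ('N[mu]_2%:E[(fun x => (f x - eta x)%:E)] <= eps%:E)%E ->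
  (mu [set x | (`|f x| <= nu)%R]
   <= (eps ^+ 2 / (delta - nu) ^+ 2)%:E + mu [set x | (`|eta x| <= delta)%R])%E.
Proof.
move=> mf meta nu_lt dev_le.
have mdev : measurable_fun setT (fun x => f x - eta x) by exact: measurable_funB.
have sublevel_meas (h : T -> R) (a : R) :
    measurable_fun setT h -> measurable [set x | `|h x| <= a].
  by move=> mh; rewrite -preimage_itvNyc; exact: measurable_normr_itv.
have dev_meas : measurable [set x | delta - nu <= `|f x - eta x|].
  by rewrite -preimage_itvcy; exact: measurable_normr_itv.
have eta_meas := sublevel_meas eta delta meta.
have sublevel_le := le_measure mu (mem_set (sublevel_meas f nu mf))
  (mem_set (measurableU _ _ dev_meas eta_meas)) (norm_le_subsetU f eta delta nu).
apply: le_trans sublevel_le (le_trans (measureU2 mu dev_meas eta_meas) _).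
by apply: leeD2r; apply: Lnorm2_chebyshev dev_le; rewrite ?subr_gt0.
Qed.

End measure_deviation.

Section hard_margin.
Context {d : measure_display} {T : measurableType d} {R : realType}.
Variable P : probability T R.

Lemma probability_norm_le_hard_margin {f eta : T -> R}
    {eps delta nu : R} :
  measurable_fun setT f -> measurable_fun setT eta -> nu < delta ->
  P [set x | delta < `|eta x|] = 1%E ->
  ('N[P]_2%:E[(fun x => (f x - eta x)%:E)] <= eps%:E)%E ->
  (P [set x | (`|f x| <= nu)%R] <= (eps ^+ 2 / (delta - nu) ^+ 2)%:E)%E.
Proof.
move=> mf meta nu_lt margin dev_le.
have margin_meas : measurable [set x | delta < `|eta x|].
  by rewrite -preimage_itvoy; exact: measurable_normr_itv.
have no_mass : P [set x | `|eta x| <= delta] = 0%E.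
  rewrite (_ : [set x | _] = ~` [set x | delta < `|eta x|]).
    by rewrite probability_setC// margin subee.
  by apply/seteqP; split => x /=; rewrite leNgt => /negP.
apply: le_trans (measure_norm_le_deviation P mf meta nu_lt dev_le) _.
rewrite -[leRHS]adde0 leeD2l//.
(* The measure underlying [P] is only convertible, not syntactically equal, to [P]. *)
by change (P [set x | (`|eta x| <= delta)%R] <= 0)%E; rewrite no_mass.
Qed.

End hard_margin.

Theorem lemma8 (R : realType) (d : nat)
  (rho : probability (d.-tuple R * R)%type R)
  (eta f : d.-tuple R -> R) (eps : R) :
  supported_on_cube_labels rho ->
  is_regression_function rho eta ->
  in_L2 rho f ->
  0 < eps ->
  (Lnorm (marginalX rho) 2%:E (fun x => (f x - eta x)%:E) <= eps%:E)%E ->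
  (* (i) low-noise condition *)
  (forall q C : R, 0 < q -> 0 < C ->
     (forall delta : R, 0 < delta ->
        (marginalX rho [set x | (`|eta x| <= delta)%R] <= (C * delta `^ q)%:E)%E) ->
     forall delta nu : R, eps < delta -> 0 < nu -> nu < delta ->
       (marginalX rho [set x | (`|f x| <= nu)%R]
        <= (eps ^+ 2 / (delta - nu) ^+ 2 + C * delta `^ q)%:E)%E)
  /\
  (* (ii) hard-margin condition *)
  (forall delta : R, 0 < delta ->
     marginalX rho [set x | (delta < `|eta x|)%R] = 1%:E ->
     eps < delta ->
     forall nu : R, nu < delta ->
       (marginalX rho [set x | (`|f x| <= nu)%R]
        <= (eps ^+ 2 / (delta - nu) ^+ 2)%:E)%E).
Proof.
move=> _ [meta _] [mf _] _ dev_le.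
split=> [q C _ _ low_noise delta nu _ nu_gt0 nu_lt | delta _ margin _ nu nu_lt].
  rewrite EFinD; apply: le_trans (measure_norm_le_deviation _ mf meta nu_lt dev_le) _.
  by rewrite leeD2l// low_noise// (lt_trans nu_gt0).
exact: probability_norm_le_hard_margin mf meta nu_lt margin dev_le.
Qed.
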